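(* Let $d \geq 3$ and let \[ H(\mathbf{x}) = \left(\prod_{i=1}^d (1-x_i)\right)\left(1 - \sum_{i=2}^d (i-1)\, e_i(\mathbf{x})\right), \qquad \mathbf{x}=(x_1,\ldots,x_d)\in\mathbb{C}^d, \] where $e_i$ is the $i$th elementary symmetric polynomial in $x_1,\ldots,x_d$. Let $\mathcal{V} = \{\mathbf{x} \in \mathbb{C}^d : H(\mathbf{x}) = 0\}$ and $\mathbf{c} = \left(\frac{1}{d-1}, \ldots, \frac{1}{d-1}\right) \in \mathbb{C}^d$. Then $\mathbf{c}$ is a strictly minimal point of $\mathcal{V}$.
   Context: For $\mathbf{x}\in\mathbb{C}^d$, the polydisk is $\mathbf{D}(\mathbf{x}) = \{\mathbf{x}' : |x_i'| \le |x_i| \text{ for all } i\}$ and the torus is $\mathbf{T}(\mathbf{x}) = \{\mathbf{x}' : |x_i'| = |x_i| \text{ for all } i\}$. A point $\mathbf{x}\in\mathcal{V}$ is minimal if all its coordinates are nonzero and $\mathcal{V}\cap\mathbf{D}(\mathbf{x}) \subset \mathbf{T}(\mathbf{x})$; it is strictly minimal if it is minimal and it is the only point of $\mathcal{V}$ in $\mathbf{T}(\mathbf{x})$. *)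

From HB Require Import structures.
From mathcomp Require Import all_boot all_order all_algebra.
From mathcomp Require Import reals.
From mathcomp Require Export complex.
Set Implicit Arguments.
Unset Strict Implicit.
Unset Printing Implicit Defensive.
Import Order.TTheory GRing.Theory Num.Theory.
Local Open Scope ring_scope.
Local Open Scope complex_scope.

Section Defs.
Variable R : realType.
Local Notation C := R[i].

Definition pt (d : nat) := 'I_d -> C.

Definition esym_pt (d i : nat) (x : pt d) : C :=
  \sum_(s : {set 'I_d} | #|s| == i) \prod_(j in s) x j.

Definition Hpoly (d : nat) (x : pt d) : C :=
  (\prod_(j < d) (1 - x j)) *
  (1 - \sum_(2 <= i < d.+1) (i.-1)%:R * esym_pt i x).

Definition Vset (d : nat) : pt d -> Prop := fun x => Hpoly x = 0.

Definition polydisk (d : nat) (x x' : pt d) : Prop :=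
  forall i, `|x' i| <= `|x i|.
Definition torus (d : nat) (x x' : pt d) : Prop :=
  forall i, `|x' i| = `|x i|.

Definition minimal (d : nat) (V : pt d -> Prop) (x : pt d) : Prop :=
  V x /\ (forall i, x i != 0) /\
  (forall x', V x' -> polydisk x x' -> torus x x').

Definition strictly_minimal (d : nat) (V : pt d -> Prop) (x : pt d) : Prop :=
  minimal V x /\ (forall x', V x' -> torus x x' -> x' = x).

Definition cpt (d : nat) : pt d := fun _ => ((d.-1)%:R)^-1.
End Defs.

(* Expanding both sides into sums over subsets J of coordinates, the second
   factor of H is  prod_j (1 + x_j) - sum_j x_j prod_(i != j) (1 + x_i),  so
   away from the hyperplanes x_j = 1 and x_j = -1, H vanishes exactly when
   sum_j x_j / (1 + x_j) = 1.  On the polydisk |x_j| <= r = 1/(d-1) < 1 the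
   map z |-> z / (1 + z) has real part at most r / (1 + r) = 1/d, with equality
   only at z = r; taking real parts of the equation forces every x_j = r. *)
From HB Require Import structures.
From mathcomp Require Import all_boot all_order all_algebra.
From mathcomp Require Import reals.
From mathcomp Require Import ring lra.
From mathcomp Require boolp.
Set Implicit Arguments.
Unset Strict Implicit.
Unset Printing Implicit Defensive.
Import Order.TTheory GRing.Theory Num.Theory.
Local Open Scope ring_scope.
Local Open Scope complex_scope.

Section ProdOneAdd.
Variables (R : comPzRingType) (I : finType) (x : I -> R).

Lemma prod_1D_sum_subsets :
  \prod_j (1 + x j) = \sum_(J : {set I}) \prod_(j in J) x j.
Proof.
under eq_bigr do rewrite addrC.
by rewrite bigA_distr; apply: eq_bigr => J _; rewrite [RHS]big_mkcond.
Qed.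

Lemma sum_subsets_mem_prod j :
  \sum_(J : {set I}) (if j \in J then \prod_(i in J) x i else 0) =
  x j * \prod_(i | i != j) (1 + x i).
Proof.
have := @bigA_distr R 0 1 *%R +%R I x (fun i => if i == j then 0 else 1).
rewrite (bigD1 j) //= eqxx addr0.
under [X in _ * X = _ -> _]eq_bigr => i /negbTE -> do rewrite addrC.
move=> ->; apply: eq_bigr => J _; case: ifP => jJ; last first.
  by rewrite (bigD1 j) //= jJ eqxx mul0r.
rewrite big_mkcond; apply: eq_bigr => i _; case: ifP => // iJ.
by case: eqP => // eq_ij; rewrite eq_ij jJ in iJ.
Qed.

Lemma sum_subsets_card_prod :
  \sum_(J : {set I}) #|J|%:R * \prod_(j in J) x j =
  \sum_j x j * \prod_(i | i != j) (1 + x i).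
Proof.
under eq_bigr => J _ do rewrite mulr_natl -sumr_const big_mkcond.
by rewrite exchange_big; apply: eq_bigr => j _; apply: sum_subsets_mem_prod.
Qed.

End ProdOneAdd.

Lemma prod_1D_sub_sum_div (F : fieldType) (I : finType) (x : I -> F) :
    (forall j, 1 + x j != 0) ->
  \prod_j (1 + x j) - \sum_j x j * \prod_(i | i != j) (1 + x i) =
  \prod_j (1 + x j) * (1 - \sum_j x j / (1 + x j)).
Proof.
move=> x_neq0; rewrite mulrBr mulr1 big_distrr; congr (_ - _).
by apply: eq_bigr => j _; rewrite [in RHS](bigD1 j) //= [RHS]mulrC mulrA divfK.
Qed.

Lemma norm_lt1_onerD_neq0 (R : numDomainType) (z : R) : `|z| < 1 -> 1 + z != 0.
Proof.
apply: contraTneq => /eqP; rewrite addrC addr_eq0 => /eqP ->.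
by rewrite normrN normr1 ltxx.
Qed.

Section Hpoly.
Variables (R : realType) (d : nat).
Implicit Type x : pt R d.

Lemma one_sub_esym_pt x :
  1 - \sum_(2 <= i < d.+1) (i.-1)%:R * esym_pt i x =
  \sum_(J : {set 'I_d}) (1 - #|J|%:R) * \prod_(j in J) x j.
Proof.
have esymE i : (i.-1)%:R * esym_pt i x = \sum_(J : {set 'I_d})
    (if #|J| == i then (#|J|.-1)%:R * \prod_(j in J) x j else 0).
  rewrite big_distrr big_mkcond; apply: eq_bigr => J _.
  by case: eqP => [->|].
under eq_bigr do rewrite esymE.
rewrite exchange_big /=.
under eq_bigr => J _.
  rewrite -big_mkcond (eq_bigl (fun i => i == #|J|)) => [|i]; last exact: eq_sym.
  rewrite big_nat1_eq ltnS (leq_trans (max_card _)) ?card_ord // andbT.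
  over.
rewrite (bigD1 set0) //= [RHS](bigD1 set0) //= cards0 big_set0 /=.
rewrite add0r subr0 mulr1 -sumrN; congr (_ + _); apply: eq_bigr => J J0.
have : #|J| != 0%N by rewrite cards_eq0.
case: #|J| => [//|[|m]] _ /=; first by rewrite subrr mul0r oppr0.
by rewrite -natr1; ring.
Qed.

Lemma Hpoly_prodE x : Hpoly x = \prod_j (1 - x j) *
  (\prod_j (1 + x j) - \sum_j x j * \prod_(i | i != j) (1 + x i)).
Proof.
rewrite /Hpoly one_sub_esym_pt (prod_1D_sum_subsets x) -sum_subsets_card_prod.
by rewrite -sumrB; congr (_ * _); apply: eq_bigr => J _; rewrite mulrBl mul1r.
Qed.

Lemma Hpoly_eq0 x : (forall j, `|x j| < 1) ->
  (Hpoly x == 0) = (\sum_j x j / (1 + x j) == 1).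
Proof.
move=> x_lt1; have xD_neq0 j : 1 + x j != 0 by apply: norm_lt1_onerD_neq0.
have xB_neq0 j : 1 - x j != 0 by apply: norm_lt1_onerD_neq0; rewrite normrN.
have prodD_neq0 : \prod_j (1 + x j) != 0 by apply/prodf_neq0.
have prodB_neq0 : \prod_j (1 - x j) != 0 by apply/prodf_neq0.
rewrite Hpoly_prodE prod_1D_sub_sum_div // !mulf_eq0.
by rewrite (negbTE prodB_neq0) (negbTE prodD_neq0) subr_eq0 eq_sym.
Qed.

End Hpoly.

Lemma Re_div_onerD_leif (R : realType) (z : R[i]) (r : R) :
    r < 1 -> `|z| <= r%:C ->
  complex.Re (z / (1 + z)) <= r / (1 + r) ?= iff (z == r%:C).
Proof.
case: z => a b r_lt1; rewrite normc_def lecR => norm_le.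
have r_ge0 : 0 <= r := le_trans (sqrtr_ge0 _) norm_le.
have sq_le : a ^+ 2 + b ^+ 2 <= r ^+ 2.
  have s_ge0 := sqrtr_ge0 (a ^+ 2 + b ^+ 2).
  rewrite -(@sqr_sqrtr _ (a ^+ 2 + b ^+ 2)) ?addr_ge0 ?sqr_ge0 //; nra.
have a_le : a <= r by nra.
have a_ge : - r <= a by nra.
set N := (1 + a) ^+ 2 + b ^+ 2.
have N_gt0 : 0 < N by rewrite /N; nra.
have -> : complex.Re ((a +i* b) / (1 + (a +i* b))) = (a + a ^+ 2 + b ^+ 2) / N.
  by rewrite /= !add0r -/N; ring.
have r1_gt0 : 0 < 1 + r by lra.
(* (1 + r) (a + a^2 + b^2) - r N = (a^2 + b^2 - r^2) - (r - a) (1 - r) *)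
have gap : 0 <= (r - a) * (1 - r) by apply: mulr_ge0; lra.
split.
  by rewrite ler_pdivrMr // mulrAC ler_pdivlMr // /N; nra.
rewrite eq_complex /=; apply/idP/andP => [|[/eqP a_eq /eqP b_eq]]; last first.
  by rewrite /N a_eq b_eq; apply/eqP; field; lra.
rewrite eqr_div ?(gt_eqF N_gt0) ?(gt_eqF r1_gt0) // /N => /eqP eq_cross.
have a_eq : a = r by nra.
have b2_eq : b ^+ 2 = 0 by rewrite a_eq in eq_cross; nra.
by rewrite a_eq -sqrf_eq0 b2_eq !eqxx.
Qed.

Section CriticalPoint.
Variables (R : realType) (n : nat).
Local Notation d := n.+3.
Local Notation c := (@cpt R d).
Local Notation r := (n.+2%:R^-1 : R).

Lemma cptE j : c j = r%:C.
Proof. by rewrite /cpt fmorphV rmorph_nat. Qed.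

Lemma cpt_gt0 : 0 < r.
Proof. by rewrite invr_gt0 ltr0n. Qed.

Lemma cpt_lt1 : r < 1.
Proof. by rewrite invf_lt1 ?ltr0n // ltr1n. Qed.

Lemma normr_cpt j : `|c j| = r%:C.
Proof. by rewrite cptE ger0_norm // ler0c ltW // cpt_gt0. Qed.

Lemma sum_cpt_ratio : \sum_(j < d) r / (1 + r) = 1.
Proof.
rewrite sumr_const card_ord -mulr_natr.
have n_ge0 : (0 : R) <= n%:R := ler0n _ _.
by field; apply/andP; split; apply/eqP; lra.
Qed.

Lemma Vset_cpt : Vset c.
Proof.
have c_lt1 j : `|c j| < 1 by rewrite normr_cpt ltcR cpt_lt1.
apply/eqP; rewrite Hpoly_eq0 //.
have ratioE j : c j / (1 + c j) = (r / (1 + r))%:C.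
  have onerE : (1 + r)%:C = 1 + r%:C by rewrite rmorphD rmorph1.
  by rewrite cptE -onerE -fmorphV -rmorphM.
by rewrite (eq_bigr _ (fun j _ => ratioE j)) -rmorph_sum sum_cpt_ratio rmorph1.
Qed.

Lemma polydisk_Vset_cpt x : Vset x -> polydisk c x -> x = c.
Proof.
move=> /eqP Vx Dx; have x_le j : `|x j| <= r%:C by rewrite -(normr_cpt j).
have x_lt1 j : `|x j| < 1 by rewrite (le_lt_trans (x_le j)) // ltcR cpt_lt1.
have := leif_sum (fun j (_ : true) => Re_div_onerD_leif cpt_lt1 (x_le j)).
rewrite -(raddf_sum (@complex.Re R : Rcomplex R -> R)).
move: Vx; rewrite Hpoly_eq0 // => /eqP ->; rewrite sum_cpt_ratio => -[_ eq_iff_all].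
have /forall_inP x_eq : [forall (j | true), x j == r%:C] by rewrite -eq_iff_all.
by apply: boolp.funext => j; rewrite cptE; apply/eqP/x_eq.
Qed.

End CriticalPoint.

Theorem mainTheorem2 (R : realType) (d : nat) (hd : (3 <= d)%N) :
  strictly_minimal (@Vset R d) (@cpt R d).
Proof.
case: d hd => [|[|[|n]]] // _.
split; last by move=> x Vx Tx; apply: polydisk_Vset_cpt => // j; rewrite Tx.
split; first exact: Vset_cpt.
split; first by move=> j; rewrite cptE eq_complex negb_and gt_eqF // cpt_gt0.
by move=> x Vx Dx j; rewrite (polydisk_Vset_cpt Vx Dx).
Qed.
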